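(* Let $K$ be a field, $S=K[x_1,\ldots,x_n]$, $I\subset S$ a monomial ideal with $I\ne S$ and $G(I)=\{x^{a_1},\ldots,x^{a_m}\}$. Let $T$ be the polynomial ring over $K$ in variables $x_{l1},\ldots,x_{lm_l}$, $l=1,\ldots,n$. For $l=1,\ldots,n$ and $j=1,\ldots,m$ let $L_{l,a_j(l)}$ be a monomial ideal in $x_{l1},\ldots,x_{lm_l}$ with $L_{l,a_j(l)}\subset L_{l,a_k(l)}$ whenever $a_j(l)\ge a_k(l)$, and let $L_j=\prod_{l=1}^nL_{l,a_j(l)}\subset T$. Then the ideals $L_{ij}$ of the complex $\mathbb{F}^*$ of $L_1,\ldots,L_m$ induced by $I$ satisfy \[ L_{ij}=\prod_{l=1}^nL_{l,a_{ij}(l)}\quad\text{for all }1\le i\le p,\ 1\le j\le\beta_i, \] where $L_{l,a_{ij}(l)}$ denotes $L_{l,a_k(l)}$ for any $k$ with $a_k(l)=a_{ij}(l)$ (such $k$ always exists).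
   Context: For $a\in\mathbb{N}^n$, $x^a=x_1^{a(1)}\cdots x_n^{a(n)}$; $G(I)$ is the minimal monomial generating set. Let $0\to F_p\to\cdots\to F_1\to F_0\to S/I\to 0$ be the $\mathbb{Z}^n$-graded minimal free resolution of $S/I$ with differential $\partial$, where $F_0=S$ with basis $f_{01}$ of degree $0$, and $F_i=\bigoplus_{j=1}^{\beta_i}Sf_{ij}$ with $f_{ij}$ homogeneous of multidegree $a_{ij}\in\mathbb{N}^n$; here $\beta_1=m$, $a_{1j}=a_j$, $\partial(f_{1j})=x^{a_j}f_{01}$. Write $\partial(f_{ij})=\sum_k\lambda^{(i)}_{kj}x^{a_{ij}-a_{i-1,k}}f_{i-1,k}$ with $\lambda^{(i)}_{kj}\in K$, where $\lambda^{(i)}_{kj}=0$ whenever $a_{ij}-a_{i-1,k}\notin\mathbb{N}^n$. The ideals of $\mathbb{F}^*$ are defined by $L_{1j}=L_j$ and, for $i\ge2$, $L_{ij}=\bigcap_{k:\lambda^{(i)}_{kj}\ne0}L_{i-1,k}$. *)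

From HB Require Import structures.
From mathcomp Require Import all_boot all_order all_algebra.
From mathcomp Require Import mpoly.
Set Implicit Arguments. Unset Strict Implicit. Unset Printing Implicit Defensive.
Import Order.TTheory GRing.Theory.
Local Open Scope ring_scope.

Definition subsetR (R : Type) := R -> Prop.

Definition gen_ideal (R : comPzRingType) (G : subsetR R) : subsetR R :=
  fun f => exists s : seq (R * R),
      (forall x, x \in s -> G x.2) /\ f = \sum_(x <- s) (x.1 * x.2).

Definition unit_ideal (R : Type) : subsetR R := fun _ => True.

Definition prod_ideal (R : comPzRingType) (L M : subsetR R) : subsetR R :=
  gen_ideal (fun f => exists g h, L g /\ M h /\ f = g * h).

Definition big_prod_ideal (R : comPzRingType) (n : nat) (L : 'I_n -> subsetR R)
  : subsetR R :=
  foldr (fun l acc => prod_ideal (L l) acc) (@unit_ideal R) (enum 'I_n).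

Definition ideal_eq (R : Type) (L M : subsetR R) := forall f, L f <-> M f.

Definition monomial_ideal_of (K : fieldType) (n m : nat) (a : 'I_m -> 'X_{1..n})
  : subsetR {mpoly K[n]} :=
  gen_ideal (fun f => exists j : 'I_m, f = 'X_[a j]).

(* T = K[x_v : v < N]; each variable v belongs to the block blk v = l, i.e.
   the variables x_{l1},...,x_{l m_l} are the v with blk v = l. *)
Definition monomial_ideal_in_block (K : fieldType) (N n : nat)
    (blk : 'I_N -> 'I_n) (l : 'I_n) (L : subsetR {mpoly K[N]}) : Prop :=
  exists G : 'X_{1..N} -> Prop,
    (forall mo, G mo -> forall v : 'I_N, blk v != l -> mo v = 0%N) /\
    ideal_eq L (gen_ideal (fun f => exists mo, G mo /\ f = 'X_[mo])).

(* The i-th differential of the Z^n-graded complex as a matrix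
   F_i = S^(beta i) -> F_(i-1) = S^(beta (i-1)) (acting on column vectors):
   d(f_ij) = sum_k lam i k j * x^(ad i j - ad (i-1) k) f_(i-1,k). *)
Definition diff_mx (K : fieldType) (n : nat) (beta : nat -> nat)
    (ad : nat -> nat -> 'X_{1..n}) (lam : nat -> nat -> nat -> K) (i : nat)
  : 'M[{mpoly K[n]}]_(beta i.-1, beta i) :=
  \matrix_(k < beta i.-1, j < beta i)
     (lam i k j *: 'X_[(ad i j - ad i.-1 k)%MM]).

(* (beta, ad, lam) describe a Z^n-graded minimal free resolution
   0 -> F_p -> ... -> F_1 -> F_0 -> S/I -> 0  with I generated by x^(a j). *)
Definition is_graded_min_free_res (K : fieldType) (n m : nat)
    (a : 'I_m -> 'X_{1..n}) (p : nat) (beta : nat -> nat)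
    (ad : nat -> nat -> 'X_{1..n}) (lam : nat -> nat -> nat -> K) : Prop :=
  (* F_0 = S with basis f_01 of degree 0 *)
      (beta 0 = 1%N /\ ad 0 0 = 0%MM) /\
      (* F_1 : basis f_1j of degree a_j, d(f_1j) = x^(a_j) f_01 *)
      (beta 1 = m /\ (forall j : 'I_m, ad 1 j = a j /\ lam 1 0 j = 1)) /\
      (forall i, (p < i)%N -> beta i = 0%N) /\
      (* homogeneity: lam = 0 whenever ad i j - ad (i-1) k is not in N^n *)
      (forall i k j, ~~ (ad i.-1 k <= ad i j)%MM -> lam i k j = 0) /\
      (forall i, (1 <= i)%N -> (i < p)%N ->
           diff_mx beta ad lam i *m diff_mx beta ad lam i.+1 = 0) /\
      (* exactness at F_i, 1 <= i <= p (at F_0 and S/I it is automatic) *)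
      (forall i, (1 <= i)%N -> (i <= p)%N ->
         forall v : 'cV[{mpoly K[n]}]_(beta i),
           diff_mx beta ad lam i *m v = 0 ->
           exists w : 'cV[{mpoly K[n]}]_(beta i.+1),
             diff_mx beta ad lam i.+1 *m w = v) /\
      (* minimality: d(F_i) is contained in (x_1..x_n) F_(i-1) *)
      (forall i k j, (1 <= i)%N -> (i <= p)%N -> (k < beta i.-1)%N ->
         (j < beta i)%N -> lam i k j != 0 -> ad i.-1 k != ad i j).

(* Ideals L_ij of F^* : L_1j = L_j, L_ij = cap_{k : lam i k j <> 0} L_(i-1),k.
   (Empty intersection = unit ideal; L_0j is unused.) *)
Fixpoint Lstar (R : Type) (beta : nat -> nat) (K : Type)
    (lam : nat -> nat -> nat -> K) (zero : K) (Lgen : nat -> subsetR R)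
    (i : nat) : nat -> subsetR R :=
  match i with
  | 0 => fun _ => @unit_ideal R
  | S i' =>
    match i' with
    | 0 => Lgen
    | _ => fun j f => forall k, (k < beta i')%N -> lam i k j <> zero ->
                                Lstar beta lam zero Lgen i' k f
    end
  end.

(** In a minimal multigraded resolution the multidegree a_ij (i >= 2) is the
    lcm of the multidegrees a_(i-1)k with lambda_kj <> 0: were that lcm b strictly
    below a_ij, column j of the differential would be x^(a_ij - b) times a cycle,
    and exactness together with minimality would put 1 into the maximal ideal.
    So each coordinate a_ij(l) equals some a_(i-1)k(l) with lambda_kj <> 0, and
    by induction some a_k(l).  As L_(l,d) decreases in d, the intersection over
    those k of the products of the L_(l,a_(i-1)k(l)) is, monomial by monomial,
    the product at the coordinatewise maximum a_ij. *)
From HB Require Import structures.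
From mathcomp Require Import all_boot all_order all_algebra.
From mathcomp Require Import mpoly zify.
Import GRing.Theory.
Local Open Scope ring_scope.
Set Implicit Arguments. Unset Strict Implicit.

Section MonomialSupport.
Variables (K : fieldType) (N : nat).
Local Notation R := {mpoly K[N]}.

Definition all_msupp (P : 'X_{1..N} -> Prop) (f : R) :=
  forall mo, mo \in msupp f -> P mo.

Lemma gen_ideal_all_msupp (P : 'X_{1..N} -> Prop) (G : subsetR R) :
  (forall mo d, P mo -> P (mo + d)%MM) ->
  (forall g, G g -> all_msupp P g) -> forall f, gen_ideal G f -> all_msupp P f.
Proof.
move=> Pup PG f [s [sG ->]] mo /msupp_sum_le /flattenP [t /mapP [x xs ->]].
move=> /msuppM_le /allpairsP [[m1 m2] /= [_ m2x ->]].
rewrite mem_filter /= in xs; rewrite addmC; apply: Pup.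
exact: (PG _ (sG _ xs) _ m2x).
Qed.

Lemma gen_ideal_msupp (G : subsetR R) f :
  (forall mo, mo \in msupp f -> G 'X_[mo]) -> gen_ideal G f.
Proof.
move=> fG; exists [seq ((f@_mo)%:MP, 'X_[mo]) | mo <- msupp f]; split.
  by move=> x /mapP [mo mof ->]; apply: fG.
rewrite big_map {1}(mpolyE f); apply: eq_bigr => mo _ /=.
by rewrite mul_mpolyC.
Qed.

Lemma gen_ideal_X (G : subsetR R) mo : G 'X_[mo] -> gen_ideal G 'X_[mo].
Proof. by move=> Gmo; apply: gen_ideal_msupp => mo'; rewrite msuppX inE => /eqP ->. Qed.

End MonomialSupport.

Section BlockMonomialIdeals.
Variables (K : fieldType) (N n : nat) (blk : 'I_N -> 'I_n).
Local Notation R := {mpoly K[N]}.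

Definition block_divisible (A : subsetR R) (l : 'I_n) (mo : 'X_{1..N}) :=
  exists g : 'X_{1..N},
    (forall v, blk v != l -> g v = 0%N) /\ A 'X_[g] /\ (g <= mo)%MM.

Lemma block_divisible_addr A l mo d :
  block_divisible A l mo -> block_divisible A l (mo + d)%MM.
Proof.
move=> [g [gl [Ag gmo]]]; exists g; do 2!split=> //.
exact: lepm_trans gmo (lem_addr mo d).
Qed.

Lemma block_divisible_sub (A B : subsetR R) l mo :
  (forall f, A f -> B f) -> block_divisible A l mo -> block_divisible B l mo.
Proof. by move=> AB [g [gl [Ag gmo]]]; exists g; do 2!split=> //; apply: AB. Qed.

Lemma block_divisible_msupp A l : monomial_ideal_in_block blk l A ->
  forall f, A f -> all_msupp (block_divisible A l) f.
Proof.
move=> [G [Gl eqA]] f /eqA; apply: gen_ideal_all_msupp.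
  exact: block_divisible_addr.
move=> _ [g [Gg ->]] mo; rewrite msuppX inE => /eqP ->.
exists g; split; first exact: Gl.
by split; [apply/eqA/gen_ideal_X; exists g | exact: lepm_refl].
Qed.

Lemma foldr_prod_ideal_msupp (A : 'I_n -> subsetR R) (s : seq 'I_n) :
  (forall l, monomial_ideal_in_block blk l (A l)) -> uniq s -> forall f,
  foldr (fun l acc => prod_ideal (A l) acc) (@unit_ideal R) s f <->
  all_msupp (fun mo => forall l, l \in s -> block_divisible (A l) l mo) f.
Proof.
move=> Ablk; elim: s => [|l s IH] /=.
  by move=> _ f; split=> // _ mo _ l; rewrite in_nil.
move=> /andP [ls us] f; split.
  apply: gen_ideal_all_msupp => [mo d mo_s l' l's|].
    exact: block_divisible_addr (mo_s l' l's).
  move=> _ [x [y [Ax [Py ->]]]] mo.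
  move=> /msuppM_le /allpairsP [[m1 m2] /= [m1x m2y ->]] l'.
  rewrite inE => /orP [/eqP -> | l's].
    exact: block_divisible_addr (block_divisible_msupp (Ablk l) Ax m1x).
  by rewrite addmC; apply: block_divisible_addr; exact: (proj1 (IH us y) Py _ m2y l' l's).
move=> fs; apply: gen_ideal_msupp => mo /fs mo_s.
have [g [gl [Ag gmo]]] := mo_s l (mem_head _ _).
(* split x^mo as x^g (the block-l part) times x^(mo - g), whose block-l
   exponents are those of mo, so it stays divisible in the other blocks *)
exists 'X_[g], 'X_[mo - g]; do 2!split=> //.
  apply/(proj2 (IH us _)) => mo'; rewrite msuppX inE => /eqP -> l' l's.
  have [g' [gl' [Ag' gmo']]] := mo_s l' (ltac:(by rewrite inE l's orbT)).
  exists g'; do 2!split=> //.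
  apply/mnm_lepP => v; rewrite mnmBE.
  have l'l : l' != l by apply: contraNneq ls => <-.
  case: (eqVneq (blk v) l) => bv; first by rewrite gl' ?leq0n // bv eq_sym.
  by rewrite gl // subn0; exact: (mnm_lepP gmo').
by rewrite -mpolyXD addmC submK.
Qed.

Lemma big_prod_ideal_msupp (A : 'I_n -> subsetR R) :
  (forall l, monomial_ideal_in_block blk l (A l)) -> forall f,
  big_prod_ideal A f <-> all_msupp (fun mo => forall l, block_divisible (A l) l mo) f.
Proof.
move=> Ablk f; rewrite /big_prod_ideal (foldr_prod_ideal_msupp Ablk (enum_uniq _)).
split=> fA mo /fA mo_s l; first by apply: mo_s; rewrite mem_enum.
by move=> _; apply: mo_s.
Qed.

End BlockMonomialIdeals.

Lemma meval0_mpolyX {K : fieldType} n (d : 'X_{1..n}) : d != 0%MM ->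
  meval (fun _ => 0 : K) 'X_[d] = 0.
Proof.
move=> d0; rewrite mevalX.
have [l dl] : exists l, d l != 0%N.
  apply/existsP; apply: contraR d0 => /existsPn d0; apply/eqP/mnmP => l.
  by rewrite mnm0E; apply/eqP; have := d0 l; rewrite negbK.
by rewrite (bigD1 l) //= expr0n (negbTE dl) mul0r.
Qed.

Section MinimalResolution.
Variables (K : fieldType) (n m : nat) (a : 'I_m -> 'X_{1..n}) (p : nat)
  (beta : nat -> nat) (ad : nat -> nat -> 'X_{1..n}) (lam : nat -> nat -> nat -> K).
Hypothesis hres : is_graded_min_free_res a p beta ad lam.
Local Notation D := (diff_mx beta ad lam).

Lemma res_deg_le i k j : lam i k j != 0 -> (ad i.-1 k <= ad i j)%MM.
Proof.
have [_ [_ [_ [homogeneous _]]]] := hres.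
by move=> nz; apply: contraR nz => /(homogeneous i k j) ->; rewrite eqxx.
Qed.

(* e_j - q w would be a cycle, hence a boundary, with unit j-th entry *)
Lemma diff_col_not_max_ker i (j : 'I_(beta i.+2)) (q : {mpoly K[n]})
    (u : 'cV_(beta i.+1)) : (i.+2 <= p)%N ->
  meval (fun _ => 0) q = 0 -> (forall k, D i.+2 k j = q * u k 0) ->
  D i.+1 *m u != 0.
Proof.
have [_ [_ [beta0 [_ [_ [exactness minimal]]]]]] := hres.
move=> ip q0 colj; apply/eqP => Du.
have [w Dw] := exactness i.+1 erefl (ltnW ip) u Du.
pose v := delta_mx j 0 - q *: w.
have Dv : D i.+2 *m v = 0.
  rewrite mulmxBr -scalemxAr Dw -colE; apply/eqP; rewrite subr_eq0; apply/eqP.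
  by apply/matrixP => k c; rewrite (ord1 c) [RHS]mxE -colj mxE.
have [z Dz] := exactness i.+2 erefl ip v Dv.
have := congr1 (fun M : 'cV_(beta i.+2) => meval (fun _ => 0 : K) (M j 0)) Dz.
rewrite /v !mxE !eqxx /= rmorphB rmorphM /= q0 mul0r rmorph1 subr0.
rewrite raddf_sum big1 => [/eqP|j' _]; first by rewrite eq_sym oner_eq0.
change (meval (fun _ => 0 : K) (D i.+3 j j' * z j' 0) = 0).
rewrite mevalM mxE mevalZ.
have [->|nz] := eqVneq (lam i.+3 j j') 0; first by rewrite !mul0r.
have ip3 : (i.+3 <= p)%N.
  by case: (leqP i.+3 p) => // /beta0 b0; have := leq_trans (ltn_ord j') (eq_leq b0).
have ne := minimal i.+3 j j' erefl ip3 (ltn_ord j) (ltn_ord j') nz.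
rewrite meval0_mpolyX ?mulr0 ?mul0r //.
apply: contra ne => /eqP d0; apply/eqP.
by rewrite -[RHS](submK (res_deg_le nz)) d0 add0m.
Qed.

(* otherwise column j is x^(ad - b) times the column of degree b, a cycle *)
Lemma res_deg_coord_attained i (j : 'I_(beta i.+2)) l : (i.+2 <= p)%N ->
  exists k : 'I_(beta i.+1), lam i.+2 k j != 0 /\ ad i.+1 k l = ad i.+2 j l.
Proof.
have [_ [_ [_ [_ [complex _]]]]] := hres.
move=> ip; pose A := [pred k : 'I_(beta i.+1) | lam i.+2 k j != 0].
have A0 : (0 < #|A|)%N.
  rewrite lt0n; apply/negP => /eqP /card0_eq A0.
  have colj k : D i.+2 k j = 0 * (0 : 'cV_(beta i.+1)) k 0.
    by rewrite !mxE; have := A0 k; rewrite !inE /= => /negbFE/eqP ->; rewrite scale0r mul0r.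
  by have := diff_col_not_max_ker ip (raddf0 _) colj; rewrite mulmx0 eqxx.
pose b := [multinom \max_(k in A) ad i.+1 k l | l < n].
have kb k : A k -> (ad i.+1 k <= b)%MM.
  by move=> Ak; apply/mnm_lepP => l'; rewrite mnmE; apply: leq_bigmax_cond.
have b_le : (b <= ad i.+2 j)%MM.
  apply/mnm_lepP => l'; rewrite mnmE; apply/bigmax_leqP => k Ak.
  exact: (mnm_lepP (res_deg_le Ak) l').
have bE : b = ad i.+2 j.
  apply/eqP; apply: contraT => ne; pose c := (ad i.+2 j - b)%MM.
  have c0 : c != 0%MM.
    by apply: contra ne => /eqP c0; rewrite -[X in _ == X](submK b_le) -/c c0 add0m.
  pose u := \col_(k < beta i.+1) (lam i.+2 k j *: 'X_[(b - ad i.+1 k)%MM]).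
  have colj k : D i.+2 k j = 'X_[c] * u k 0.
    rewrite !mxE; have [->|nz] := eqVneq (lam i.+2 k j) 0.
      by rewrite !scale0r mulr0.
    rewrite -scalerAr -mpolyXD; congr (_ *: 'X_[_]); apply/mnmP => l'.
    rewrite !mnmBE !mnmDE !mnmBE.
    move: (mnm_lepP b_le l') (mnm_lepP (kb k nz) l'); rewrite /=; lia.
  rewrite -(negbTE (diff_col_not_max_ker ip (meval0_mpolyX c0) colj)); apply/eqP.
  have : D i.+1 *m col j (D i.+2) = 0 by rewrite colE mulmxA complex // mul0mx.
  have -> : col j (D i.+2) = 'X_[c] *: u.
    by apply/matrixP => k c'; rewrite (ord1 c') [RHS]mxE -colj mxE.
  rewrite -scalemxAr => /eqP; rewrite scalemx_eq0 => /orP [/eqP Xc0|/eqP //].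
  by have := @mcoeffX n K c c; rewrite Xc0 mcoeff0 eqxx => /eqP; rewrite eq_sym oner_eq0.
have [k Ak kmax] := @eq_bigmax_cond _ A (fun k : 'I_(beta i.+1) => ad i.+1 k l) A0.
by exists k; split=> //; rewrite -bE mnmE kmax.
Qed.

Definition attained (d : 'X_{1..n}) := forall l : 'I_n, exists k : 'I_m, a k l = d l.

Lemma res_deg_attained i j : (1 <= i <= p)%N -> (j < beta i)%N -> attained (ad i j).
Proof.
have [_ [[beta1 ad1] _]] := hres.
elim: i j => [//|[|i] IH] j /andP [_ ip] jb l.
  by rewrite beta1 in jb; exists (Ordinal jb); rewrite (ad1 (Ordinal jb)).1.
have [k [_ <-]] := res_deg_coord_attained (Ordinal jb) l ip.
exact: IH k (ltnW ip) (ltn_ord k) l.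
Qed.

End MinimalResolution.

Section ChainProducts.
Variables (K : fieldType) (n m : nat) (a : 'I_m -> 'X_{1..n})
  (N : nat) (blk : 'I_N -> 'I_n) (Lfam : 'I_n -> nat -> subsetR {mpoly K[N]}).
Hypothesis Lblk : forall l (j : 'I_m), monomial_ideal_in_block blk l (Lfam l (a j l)).
Hypothesis Lchain : forall l (j k : 'I_m), (a k l <= a j l)%N ->
  forall f, Lfam l (a j l) f -> Lfam l (a k l) f.

Definition chain_prod (d : 'X_{1..n}) := big_prod_ideal (fun l => Lfam l (d l)).

Lemma chain_prod_msupp d : attained a d -> forall f,
  chain_prod d f <->
  all_msupp (fun mo => forall l, block_divisible blk (Lfam l (d l)) l mo) f.
Proof. by move=> da; apply: big_prod_ideal_msupp => l; have [k <-] := da l. Qed.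

Lemma chain_prod_bigcap (I : Type) (P : I -> Prop) (e : I -> 'X_{1..n}) d :
    attained a d -> (forall k, P k -> attained a (e k)) ->
    (forall k, P k -> (e k <= d)%MM) -> (forall l, exists2 k, P k & e k l = d l) ->
  forall f, (forall k, P k -> chain_prod (e k) f) <-> chain_prod d f.
Proof.
move=> da ea ed dmax f; rewrite chain_prod_msupp //; split.
  move=> fe mo mof l; have [k Pk <-] := dmax l.
  exact: (proj1 (chain_prod_msupp (ea k Pk) f) (fe k Pk)).
move=> fd k Pk; apply/(chain_prod_msupp (ea k Pk)) => mo mof l.
apply: block_divisible_sub (fd mo mof l).
have [j dj] := da l; have [j' ej'] := ea k Pk l.
rewrite -dj -ej'; apply: Lchain; rewrite dj ej'; exact: (mnm_lepP (ed k Pk) l).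
Qed.

Lemma Lstar_chain_prod p beta ad (lam : nat -> nat -> nat -> K) :
    is_graded_min_free_res a p beta ad lam -> forall i j,
  (1 <= i <= p)%N -> (j < beta i)%N ->
  ideal_eq (Lstar beta lam 0 (fun j => chain_prod (ad 1%N j)) i j)
           (chain_prod (ad i j)).
Proof.
move=> hres; elim=> [//|[//|i] IH] j /andP [_ ip] jb f.
rewrite -(@chain_prod_bigcap nat (fun k => (k < beta i.+1)%N /\ lam i.+2 k j <> 0)
  (ad i.+1)).
- split=> [fL k [kb nz] | fL k kb nz].
    exact: (proj1 (IH k (ltnW ip) kb f) (fL k kb nz)).
  exact: (proj2 (IH k (ltnW ip) kb f) (fL k (conj kb nz))).
- exact (res_deg_attained hres (ip : (0 < i.+2 <= p)%N) jb).
- by move=> k [kb _]; exact (res_deg_attained hres (ltnW ip : (0 < i.+1 <= p)%N) kb).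
- by move=> k [_ /eqP nz]; exact: res_deg_le hres _ _ _ nz.
- move=> l; have [k [nz kl]] := res_deg_coord_attained hres (Ordinal jb) l ip.
  by exists (val k); [split; [exact: ltn_ord | apply/eqP] | exact: kl].
Qed.

End ChainProducts.

Theorem corollary1p7 (K : fieldType) (n m : nat) (a : 'I_m -> 'X_{1..n})
    (p : nat) (beta : nat -> nat) (ad : nat -> nat -> 'X_{1..n})
    (lam : nat -> nat -> nat -> K)
    (N : nat) (blk : 'I_N -> 'I_n) (Lfam : 'I_n -> nat -> subsetR {mpoly K[N]}) :
  (forall j k : 'I_m, j != k -> ~~ (a j <= a k)%MM) ->
  ~ @monomial_ideal_of K n m a 1 ->
  is_graded_min_free_res a p beta ad lam ->
  (forall (l : 'I_n) (j : 'I_m), monomial_ideal_in_block blk l (Lfam l (a j l))) ->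
  (forall (l : 'I_n) (j k : 'I_m), (a k l <= a j l)%N ->
       forall f, Lfam l (a j l) f -> Lfam l (a k l) f) ->
  let Lj := fun j : nat => big_prod_ideal (fun l => Lfam l (ad 1%N j l)) in
  forall i j, (1 <= i <= p)%N -> (j < beta i)%N ->
    (forall l : 'I_n, exists k : 'I_m, a k l = ad i j l) /\
    ideal_eq (Lstar beta lam 0 Lj i j)
             (big_prod_ideal (fun l => Lfam l (ad i j l))).
Proof.
move=> _ _ hres Lblk Lchain Lj i j ip jb; split.
  exact (res_deg_attained hres ip jb).
exact (Lstar_chain_prod Lblk Lchain hres ip jb).
Qed.
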